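(* Let $\pi$ be a group, $\Lambda=\mathbb{Z}[\pi]$, and let $D_2\xrightarrow{d_2}D_1\xrightarrow{d_1}D_0$ be a sequence of finitely generated projective $\Lambda$-modules that is exact at $D_1$. Let $d^2\colon D^1\to D^2$ be the dual of $d_2$ and let $f\colon L\to D^1$ be a $\Lambda$-homomorphism with image $f(L)=\ker d^2$. Then $$D_2\xrightarrow{d_2}D_1\xrightarrow{f^*}\operatorname{Hom}_\Lambda(L,\Lambda)$$ is exact at $D_1$.
   Context: $D^i=\operatorname{Hom}_\Lambda(D_i,\Lambda)$, and $D_1$ is identified with its double dual $\operatorname{Hom}_\Lambda(D^1,\Lambda)$ via the canonical isomorphism (valid for finitely generated projective modules), so that $f^*\colon D_1\cong\operatorname{Hom}_\Lambda(D^1,\Lambda)\to\operatorname{Hom}_\Lambda(L,\Lambda)$. *)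

From HB Require Import structures.
From mathcomp Require Import all_boot all_order all_algebra.
Set Implicit Arguments. Unset Strict Implicit. Unset Printing Implicit Defensive.
Import GRing.Theory.
Local Open Scope ring_scope.

Definition is_group (G : Type) (mul : G -> G -> G) (one : G) (inv : G -> G) :=
  [/\ associative mul, left_id one mul & left_inverse one inv mul].

(* [Lam] is the integral group ring Z[pi]: [emb : pi -> Lam] is a
   multiplicative monoid map (so Lam's multiplication is the bilinear
   extension of the group law) whose image is a Z-basis of Lam. *)
Definition is_group_ring (Lam : nzRingType) (pi : eqType)
  (mul : pi -> pi -> pi) (one : pi) (inv : pi -> pi) (emb : pi -> Lam) :=
  [/\ is_group mul one inv,
      emb one = 1,
      (forall g h, emb (mul g h) = emb g * emb h),
      (forall r : Lam, exists (s : seq pi) (c : pi -> int),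
          r = \sum_(g <- s) emb g *~ c g)
    & (forall (s : seq pi) (c : pi -> int), uniq s ->
          \sum_(g <- s) emb g *~ c g = 0 -> forall g, g \in s -> c g = 0)].

(* Finitely generated projective left module: a direct summand of Lam^n. *)
Definition fg_projective (R : nzRingType) (M : lmodType R) :=
  exists (n : nat) (i : {linear M -> 'rV[R]_n}) (p : {linear 'rV[R]_n -> M}),
    cancel i p.

Notation dual R M := {linear M -> R^o}.

Definition exact_at (A B : Type) (C : zmodType) (g : A -> B) (h : B -> C) :=
  forall x : B, h x = 0 <-> exists y, g y = x.

Definition dualmap (R : nzRingType) (M2 M1 : lmodType R) (d : M2 -> M1)
  (phi : dual R M1) : M2 -> R := fun y => phi (d y).

Definition ddual (R : nzRingType) (M : lmodType R) (x : M) : dual R M -> R :=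
  fun phi => phi x.

(* f^* : D_1 = Hom(D^1,R) -> Hom(L,R), xi |-> xi \o f. *)
Definition fstar (R : nzRingType) (M : lmodType R) (L : Type)
  (f : L -> dual R M) (x : M) : L -> R := fun l => ddual x (f l).

(* f : L -> D^1 is a homomorphism of right R-modules (D^1 = Hom(D_1,R) is a
   right module via (phi a)(x) = phi(x) a; L is a right module, i.e. a left
   module over the converse ring R^c). *)
Definition right_hom (R : nzRingType) (M : lmodType R) (L : lmodType R^c)
  (f : L -> dual R M) :=
  (forall l1 l2 x, f (l1 + l2) x = f l1 x + f l2 x) /\
  (forall (a : R^c) l x, f (a *: l) x = (f l x : R) * (a : R)).

From HB Require Import structures.
From mathcomp Require Import all_boot all_order all_algebra.
From Stdlib Require Import FunctionalExtensionality.
Set Implicit Arguments.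
Unset Strict Implicit.
Unset Printing Implicit Defensive.

Import GRing.Theory.
Local Open Scope ring_scope.

(* The [f l] are exactly the functionals on [D1] killing [im d2], so
   [f^* x = 0] says that every such functional kills [x].  Functionals on a
   finitely generated projective module separate points (it embeds in a free
   module), and [d1] induces an injection of [D1 / im d2] into the projective
   [D0]; hence such an [x] lies in [im d2]. *)

Section RowCoordinate.
Variables (R : nzRingType) (n : nat) (j : 'I_n).

Definition row_coord (v : 'rV[R]_n) : R^o := v 0 j.

Fact row_coord_is_linear : linear row_coord.
Proof. by move=> a u v; rewrite /row_coord !mxE. Qed.

HB.instance Definition _ :=
  GRing.isLinear.Build R 'rV[R]_n R^o *:%R row_coord row_coord_is_linear.
End RowCoordinate.

Lemma fg_projective_dual_separates (R : nzRingType) (M : lmodType R) (v : M) :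
  fg_projective M -> (forall phi : dual R M, phi v = 0) -> v = 0.
Proof.
case=> n [i [p ip]] phi_v0.
have iv0 : i v = 0.
  by apply/rowP => j; rewrite mxE -[LHS]/((row_coord j \o i) v) phi_v0.
by rewrite -[v]ip iv0 linear0.
Qed.

Section DualKernel.
Variables (R : nzRingType) (D2 D1 D0 : lmodType R).
Variables (d2 : {linear D2 -> D1}) (d1 : {linear D1 -> D0}).

Lemma annihilated_in_image (x : D1) :
  fg_projective D0 -> exact_at d2 d1 ->
  (forall phi : dual R D1, dualmap d2 phi = (fun _ => 0) -> phi x = 0) ->
  exists y, d2 y = x.
Proof.
move=> P0 ex ann; apply/ex; apply: (fg_projective_dual_separates P0) => phi.
apply: (ann (phi \o d1)); apply: functional_extensionality => y /=.
by rewrite /dualmap /= (proj2 (ex (d2 y))) ?linear0 //; exists y.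
Qed.

Variables (L : Type) (f : L -> dual R D1).

Lemma fstar_eq0_annihilated (x : D1) :
  (forall phi : dual R D1, dualmap d2 phi = (fun _ => 0) ->
     exists l, forall z, f l z = phi z) ->
  fstar f x = (fun _ => 0) ->
  forall phi : dual R D1, dualmap d2 phi = (fun _ => 0) -> phi x = 0.
Proof.
move=> im_f fx0 phi /im_f [l fl_phi].
by rewrite -fl_phi; apply: (congr1 (fun g => g l) fx0).
Qed.

Lemma fstar_d2_eq0 (y : D2) :
  (forall l, dualmap d2 (f l) = (fun _ => 0)) -> fstar f (d2 y) = (fun _ => 0).
Proof.
move=> fl_d2; apply: functional_extensionality => l.
exact: (congr1 (fun g => g y) (fl_d2 l)).
Qed.

End DualKernel.

Theorem lemma5p6 (pi : eqType) (mul : pi -> pi -> pi) (one : pi) (inv : pi -> pi)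
  (Lam : nzRingType) (emb : pi -> Lam)
  (Hgr : is_group_ring mul one inv emb)
  (D2 D1 D0 : lmodType Lam)
  (P2 : fg_projective D2) (P1 : fg_projective D1) (P0 : fg_projective D0)
  (d2 : {linear D2 -> D1}) (d1 : {linear D1 -> D0})
  (Hex : exact_at d2 d1)
  (L : lmodType Lam^c) (f : L -> dual Lam D1) (Hf : right_hom f)
  (Himg : forall phi : dual Lam D1,
      (exists l, forall x, f l x = phi x) <-> dualmap d2 phi = (fun _ => 0)) :
  forall x : D1, fstar f x = (fun _ => 0) <-> exists y, d2 y = x.
Proof.
move=> x; split=> [fx0 | [y <-]].
- apply: (annihilated_in_image P0 Hex).
  by apply: (fstar_eq0_annihilated (fun phi => proj2 (Himg phi))).
- by apply: fstar_d2_eq0 => l; apply/Himg; exists l.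
Qed.
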